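(* Assume the standing hypotheses (H). Then for every part $A$ of $G$ and every color $c$, at most two vertices $v\in A$ satisfy $c\in L(v)$.
   Context: A list assignment $L$ assigns to each vertex $v$ a set $L(v)$ of colors; an $L$-coloring is a proper coloring $f$ with $f(v)\in L(v)$ for all $v$; $\mathrm{ch}$ denotes choice number and $\chi$ chromatic number. A part of a complete multipartite graph is one of its maximal stable sets. Standing hypotheses (H): $k\ge1$ and $n\ge 2k+2$ are integers; $G$ is a complete $k$-partite graph (exactly $k$ nonempty parts) on $n$ vertices; $L$ is a list assignment for $G$ with $|L(v)|\ge\lceil (n+k-1)/3\rceil$ for every vertex $v$; $G$ has no $L$-coloring; $\left|\bigcup_{v\in V(G)}L(v)\right|\le n-1$; and every graph $H$ with fewer than $n$ vertices satisfies $\mathrm{ch}(H)\le\max\{\chi(H),\lceil(|V(H)|+\chi(H)-1)/3\rceil\}$. *)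

(* Finite simple graphs are symmetric irreflexive relations
   on a finType; colors are natural numbers; a list is a seq nat whose
   size (as a set of colors) is size (undup _). *)
From mathcomp Require Import all_boot.
Set Implicit Arguments. Unset Strict Implicit. Unset Printing Implicit Defensive.

Definition simple_graph (T : finType) (e : rel T) : Prop :=
  symmetric e /\ irreflexive e.

Definition lsize (s : seq nat) : nat := size (undup s).

Definition proper (T : finType) (e : rel T) (f : T -> nat) : Prop :=
  forall x y, e x y -> f x != f y.

Definition L_colorable (T : finType) (e : rel T) (L : T -> seq nat) : Prop :=
  exists f : T -> nat, proper e f /\ forall v, f v \in L v.

Definition k_colorable (T : finType) (e : rel T) (k : nat) : Prop :=
  exists f : T -> 'I_k, forall x y, e x y -> f x != f y.

Definition k_choosable (T : finType) (e : rel T) (m : nat) : Prop :=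
  forall L : T -> seq nat, (forall v, m <= lsize (L v)) -> L_colorable e L.

Definition chromatic_number (T : finType) (e : rel T) (chi : nat) : Prop :=
  k_colorable e chi /\ forall k, k_colorable e k -> chi <= k.

Definition choice_number (T : finType) (e : rel T) (c : nat) : Prop :=
  k_choosable e c /\ forall m, k_choosable e m -> c <= m.

Definition ceil3 (a : nat) : nat := (a + 2) %/ 3.

(* complete multipartite graph on 'I_n with part map p : 'I_n -> 'I_k:
   u ~ v iff they lie in different parts. *)
Definition cmp_adj (n k : nat) (p : 'I_n -> 'I_k) : rel 'I_n :=
  fun u v => p u != p v.

From mathcomp Require Import all_boot.
From mathcomp Require Import zify.
From Stdlib Require Import Classical.
From Stdlib Require Wf_nat.
Set Implicit Arguments. Unset Strict Implicit. Unset Printing Implicit Defensive.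

(* Suppose some part A contains a set S of at least three
   vertices whose lists all contain the color c.  Give every vertex of S the
   color c: S is stable, so this is proper on S.  The remaining graph
   G' = G - S is a complete multipartite graph with m <= n - 3 vertices and
   chromatic number chi <= k, so by the minimality hypothesis
   ch(G') <= max(chi, ceil((m + chi - 1)/3)) <= ceil((n + k - 1)/3) - 1.
   Deleting c from the lists of G' lowers their sizes by at most one, so G'
   has a coloring from these reduced lists, and together with the color c on
   S it is an L-coloring of G, contradicting the hypothesis. *)

Lemma ex_minimal (P : nat -> Prop) :
  (exists n, P n) -> exists n, P n /\ forall m, P m -> n <= m.
Proof.
move=> exP.
have [n [[Pn minn] _]] :=
  Wf_nat.dec_inh_nat_subset_has_unique_least_element P (fun n => classic (P n)) exP.
by exists n; split=> // m /minn /leP.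
Qed.

Lemma distinct_choice (T : finType) (L : T -> seq nat) (s : seq T) :
  uniq s -> (forall v, size s <= lsize (L v)) ->
  exists f : T -> nat, (forall v, v \in s -> f v \in L v) /\ {in s &, injective f}.
Proof.
elim: s => [|x s IH] /= => [_ _|/andP [xs us] hs].
  by exists (fun _ => 0).
have [f [fL finj]] : exists f : T -> nat,
    (forall v, v \in s -> f v \in L v) /\ {in s &, injective f}.
  by apply: IH => // v; have := hs v; lia.
(* L x has more colors than s has vertices, so some color of L x is unused *)
have [y yL yn] : exists2 y, y \in L x & y \notin map f s.
  apply/hasP; apply: contraT => /hasPn used.
  have sub : {subset undup (L x) <= map f s}.
    by move=> y; rewrite mem_undup => /used; rewrite negbK.
  have := uniq_leq_size (undup_uniq _) sub; rewrite size_map.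
  by have := hs x; rewrite /lsize; lia.
have nx v : v \in s -> (v == x) = false.
  by move=> vs; apply/eqP=> vx; move: xs; rewrite -vx vs.
exists (fun v => if v == x then y else f v); split.
  move=> v; rewrite inE => /orP [/eqP->|vs]; first by rewrite eqxx.
  by rewrite nx // fL.
move=> u v; rewrite !inE => /orP[/eqP->|hu] /orP[/eqP->|hv] //.
- by rewrite eqxx nx // => fv; move: yn; rewrite fv map_f.
- by rewrite eqxx nx // => fu; move: yn; rewrite -fu map_f.
- by rewrite !nx //; apply: finj.
Qed.

(* Every loopless graph on T is #|T|-choosable: color all vertices differently. *)
Lemma choosable_card (T : finType) (e : rel T) :
  irreflexive e -> k_choosable e #|T|.
Proof.
move=> irr L hL.
have [f [fL finj]] : exists f : T -> nat,
    (forall v, v \in enum T -> f v \in L v) /\ {in enum T &, injective f}.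
  by apply: distinct_choice (enum_uniq T) _ => v; rewrite -cardT.
exists f; split=> [x y exy|v]; last by apply: fL; rewrite mem_enum.
apply: contraTneq exy => fxy.
by rewrite (finj x y (mem_enum _ x) (mem_enum _ y) fxy) irr.
Qed.

Lemma chromatic_number_exists (T : finType) (e : rel T) :
  irreflexive e -> exists chi, chromatic_number e chi.
Proof.
move=> irr; apply: ex_minimal; exists #|T|.
exists enum_rank => x y; apply: contraTneq => /enum_rank_inj->.
by rewrite irr.
Qed.

Lemma choice_number_exists (T : finType) (e : rel T) :
  irreflexive e -> exists c, choice_number e c.
Proof. by move=> irr; apply: ex_minimal; exists #|T|; apply: choosable_card. Qed.

Lemma lsize_rem_color (c : nat) (s : seq nat) :
  lsize s - 1 <= lsize (filter (predC1 c) s).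
Proof.
rewrite /lsize -filter_undup size_filter.
have := count_predC (pred1 c) (undup s).
have := count_uniq_mem c (undup_uniq s).
rewrite (eq_count (a1 := predC (pred1 c)) (a2 := predC1 c)) //.
by case: (c \in undup s) => /= ->; lia.
Qed.

Definition induced (T : finType) (e : rel T) (A : {set T}) : rel 'I_#|A| :=
  fun a b => e (enum_val a) (enum_val b).
Arguments induced {T} e A.

Lemma induced_simple (T : finType) (e : rel T) (A : {set T}) :
  simple_graph e -> simple_graph (induced e A).
Proof. by move=> [esym eirr]; split=> [a b|a]; rewrite /induced (esym, eirr). Qed.

Lemma induced_colorable (T : finType) (e : rel T) (A : {set T}) k :
  k_colorable e k -> k_colorable (induced e A) k.
Proof. by move=> [f fP]; exists (fun a => f (enum_val a)) => a b /fP. Qed.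

Lemma cmp_colorable n k (p : 'I_n -> 'I_k) : k_colorable (cmp_adj p) k.
Proof. by exists p. Qed.

Section StableExtension.

Variables (T : finType) (e : rel T) (L : T -> seq nat) (S : {set T}) (c : nat).

Definition lists_without_c : 'I_#|~: S| -> seq nat :=
  fun a => filter (predC1 c) (L (enum_val a)).

(* Color the vertices of S with c and every other vertex v = enum_val a
   with f' a. *)
Definition glue (f' : 'I_#|~: S| -> nat) (v : T) : nat :=
  if [pick a | enum_val a == v] is Some a then f' a else c.

Lemma glue_in f' v : v \in S -> glue f' v = c.
Proof.
move=> vS; rewrite /glue; case: pickP => // a /eqP va.
by have := enum_valP a; rewrite va inE vS.
Qed.

Lemma glue_out f' a : glue f' (enum_val a) = f' a.
Proof. by rewrite /glue; case: pickP => [b /eqP/enum_val_inj->|/(_ a)]; rewrite ?eqxx. Qed.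

Lemma outside_enum v : v \notin S -> exists a : 'I_#|~: S|, enum_val a = v.
Proof.
move=> vS; have vSc : v \in ~: S by rewrite inE.
by exists (enum_rank_in vSc v); rewrite enum_rankK_in.
Qed.

Lemma stable_color_extension :
  {in S &, forall x y, ~~ e x y} -> {in S, forall v, c \in L v} ->
  L_colorable (induced e (~: S)) lists_without_c -> L_colorable e L.
Proof.
move=> Sstable Sc [f' [f'P f'L]].
have avoid_c a : f' a != c by have := f'L a; rewrite mem_filter => /andP[].
exists (glue f'); split=> [x y exy|v].
  have [xS|/outside_enum [a xa]] := boolP (x \in S);
    have [yS|/outside_enum [b yb]] := boolP (y \in S).
  - by move: (Sstable x y xS yS); rewrite exy.
  - by rewrite -yb (glue_in _ xS) glue_out eq_sym avoid_c.
  - by rewrite -xa (glue_in _ yS) glue_out avoid_c.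
  - by rewrite -xa -yb !glue_out; apply: f'P; rewrite /induced xa yb.
have [vS|/outside_enum [a <-]] := boolP (v \in S); first by rewrite (glue_in _ vS) Sc.
by rewrite glue_out; have := f'L a; rewrite mem_filter => /andP[].
Qed.

End StableExtension.

Lemma choice_bound_drop n k m chi :
  1 <= k -> 2 * k + 2 <= n -> chi <= k -> m + 3 <= n ->
  maxn chi (ceil3 (m + chi - 1)) <= ceil3 (n + k - 1) - 1.
Proof. by rewrite /ceil3; lia. Qed.

Theorem corollary12 (k n : nat) (p : 'I_n -> 'I_k) (L : 'I_n -> seq nat) :
  1 <= k ->
  2 * k + 2 <= n ->
  (* exactly k nonempty parts: the parts are the fibres of p *)
  (forall i : 'I_k, exists v : 'I_n, p v = i) ->
  (forall v, ceil3 (n + k - 1) <= lsize (L v)) ->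
  ~ L_colorable (cmp_adj p) L ->
  size (undup (flatten [seq L v | v <- enum 'I_n])) <= n - 1 ->
  (forall (m : nat) (e : rel 'I_m), m < n -> simple_graph e ->
     forall chi c, chromatic_number e chi -> choice_number e c ->
       c <= maxn chi (ceil3 (m + chi - 1))) ->
  forall (i : 'I_k) (c : nat),
    #|[set v : 'I_n | (p v == i) && (c \in L v)]| <= 2.
Proof.
move=> k1 hn _ hL noLcol _ minimal i c.
set S := [set v : 'I_n | (p v == i) && (c \in L v)].
rewrite leqNgt; apply/negP => S3; apply: noLcol.
set G' := induced (cmp_adj p) (~: S).
have G'simple : simple_graph G'.
  by apply: induced_simple; split=> [u v|v]; rewrite /cmp_adj ?eqxx // eq_sym.
have card_rest : #|~: S| + 3 <= n by have := cardsC S; rewrite card_ord; lia.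
have [chi chiP] := chromatic_number_exists G'simple.2.
have [ch chP] := choice_number_exists G'simple.2.
have chi_k : chi <= k by apply: chiP.2; apply/induced_colorable/cmp_colorable.
have ch_small : ch <= ceil3 (n + k - 1) - 1.
  apply: leq_trans (choice_bound_drop k1 hn chi_k card_rest).
  by apply: (minimal _ G') => //; lia.
apply: (stable_color_extension (S := S) (c := c)).
- by move=> x y; rewrite !inE /cmp_adj => /andP[/eqP-> _] /andP[/eqP-> _]; rewrite eqxx.
- by move=> v; rewrite inE => /andP[].
- apply: chP.1 => a; apply: leq_trans ch_small _.
  by apply: leq_trans (lsize_rem_color c _); have := hL (enum_val a); lia.
Qed.
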